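(* Let $R\subset S$ be a distributive FCP ring extension. Then $\mathcal S[R,T]=\mathcal S[R,S]\cap T$ for each $T\in[R,S]$ with $T\neq R$.
   Context: All rings are commutative with identity. $[R,S]$ is the lattice of $R$-subalgebras of $S$ (meet = intersection, join = product). FCP: every chain in $[R,S]$ is finite. $T\subset U$ minimal means $[T,U]=\{T,U\}$; an atom of $[R,T]$ is $A$ with $R\subset A$ minimal and $A\subseteq T$; the socle $\mathcal S[R,T]$ is the product of all atoms of $[R,T]$. The extension is distributive if the lattice $[R,S]$ is distributive. *)

From HB Require Import structures.
From mathcomp Require Import all_boot all_order all_algebra.
From mathcomp Require Import boolp classical_sets cardinality.
Set Implicit Arguments. Unset Strict Implicit. Unset Printing Implicit Defensive.
Import GRing.Theory.
Local Open Scope classical_set_scope.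
Local Open Scope ring_scope.

Section RingExt.
Variable S : comPzRingType.

Definition subring (A : set S) : Prop :=
  A 1 /\ (forall x y, A x -> A y -> A (x - y)) /\ (forall x y, A x -> A y -> A (x * y)).

(* T is an element of [R,S]: an R-subalgebra of S, i.e. a subring containing R. *)
Definition interm (R T : set S) : Prop := subring T /\ R `<=` T.

Definition gen (X : set S) : set S :=
  fun x => forall B, subring B -> X `<=` B -> B x.

(* Join (product) of two elements of [R,S]: the subalgebra they generate. *)
Definition join (A B : set S) : set S := gen (A `|` B).

Definition minimal_ext (A B : set S) : Prop :=
  A `<=` B /\ A <> B /\
  forall C, interm A C -> C `<=` B -> C = A \/ C = B.

Definition atom (R T A : set S) : Prop :=
  subring A /\ minimal_ext R A /\ A `<=` T.

(* The socle S[R,T]: product (join) of all atoms of [R,T] (equal to R if none). *)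
Definition socle (R T : set S) : set S :=
  gen (R `|` (fun x => exists A, atom R T A /\ A x)).

Definition chain (R : set S) (C : set (set S)) : Prop :=
  (forall A, C A -> interm R A) /\
  (forall A B, C A -> C B -> A `<=` B \/ B `<=` A).

Definition FCP (R : set S) : Prop := forall C, chain R C -> finite_set C.

(* [R,S] is a distributive lattice (meet = intersection, join = product). *)
Definition distributive (R : set S) : Prop :=
  forall A B C, interm R A -> interm R B -> interm R C ->
    A `&` join B C = join (A `&` B) (A `&` C).

End RingExt.

From mathcomp Require Import all_boot all_order all_algebra.
From mathcomp Require Import boolp classical_sets cardinality.
Local Open Scope classical_set_scope.

(* Every element of the socle of [R,S] already lies in the join of finitely
   many atoms A_1, ..., A_n of [R,S].  Distributivity turns the meet of T with
   this join into the join of the T ∩ A_i, and by minimality of R ⊂ A_i each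
   T ∩ A_i is either R or an atom of [R,T]. *)

Section Generated.
Context {S : comPzRingType}.
Implicit Types X Y A B C D : set S.

Lemma sub_gen {X} : X `<=` gen X.
Proof. by move=> x Xx B _ XB; apply: XB. Qed.

Lemma gen_subring X : subring (gen X).
Proof.
split; first by move=> B [B1 _].
by split=> x y gx gy B sB XB; have [_ [BB BM]] := sB;
  [apply: BB | apply: BM]; [exact: gx | exact: gy | exact: gx | exact: gy].
Qed.

Lemma gen_min {X B} : subring B -> X `<=` B -> gen X `<=` B.
Proof. by move=> sB XB x gx; apply: gx. Qed.

Lemma genS {X Y} : X `<=` Y -> gen X `<=` gen Y.
Proof. by move=> XY x gx B sB YB; apply: gx => // y /XY /YB. Qed.

Lemma joinS A B C D : A `<=` C -> B `<=` D -> join A B `<=` join C D.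
Proof. by move=> AC BD; apply: genS; apply: setUSS. Qed.

Lemma subringI A B : subring A -> subring B -> subring (A `&` B).
Proof.
move=> [A1 [AB AM]] [B1 [BB BM]]; split; first by [].
by split=> x y [Ax Bx] [Ay By]; split; [exact: AB | exact: BB | exact: AM | exact: BM].
Qed.

Lemma subring_bigcup_directed (I : Type) (P : set I) (F : I -> set S) :
  P !=set0 -> (forall i, P i -> subring (F i)) ->
  (forall i j, P i -> P j -> exists2 k, P k & F i `|` F j `<=` F k) ->
  subring (\bigcup_(i in P) F i).
Proof.
move=> [i0 Pi0] sF dF; split; first by exists i0 => //; case: (sF i0 Pi0).
split=> x y [i Pi Fix] [j Pj Fjy]; have [k Pk Fijk] := dF i j Pi Pj;
  have [_ [FB FM]] := sF k Pk; exists k => //.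
- by apply: FB; apply: Fijk; [left | right].
- by apply: FM; apply: Fijk; [left | right].
Qed.

End Generated.

Section Socle.
Context {S : comPzRingType}.
Variable R : set S.
Implicit Types (T A : set S) (L : seq (set S)).

Definition join_seq L : set S := gen (R `|` \bigcup_(A in [set` L]) A).

Lemma join_seq_interm L : interm R (join_seq L).
Proof. by split; [exact: gen_subring | move=> x Rx; apply: sub_gen; left]. Qed.

Lemma join_seqS {L1 L2} : {subset L1 <= L2} -> join_seq L1 `<=` join_seq L2.
Proof.
move=> sL; apply: genS; apply: setUS.
by move=> x [A /= /sL L2A Ax]; exists A.
Qed.

Lemma join_seq_cons A L : join_seq (A :: L) = join A (join_seq L).
Proof.
have LAL : {subset L <= A :: L} by move=> B LB; rewrite inE LB orbT.
rewrite eqEsubset; split; apply: gen_min; try exact: gen_subring.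
- move=> x [Rx | [B /=]]; first by apply: sub_gen; right; apply: sub_gen; left.
  rewrite inE => /orP[/eqP-> Ax | LB Bx]; apply: sub_gen; first by left.
  by right; apply: sub_gen; right; exists B.
- move=> x [Ax | /(join_seqS LAL) //].
  by apply: sub_gen; right; exists A; rewrite /= ?inE ?eqxx.
Qed.

Lemma socle_join_seq T x : socle R T x ->
  exists2 L, (forall A, A \in L -> atom R T A) & join_seq L x.
Proof.
pose atoms L := forall A, A \in L -> atom R T A.
have sP : subring (\bigcup_(L in atoms) join_seq L).
  apply: subring_bigcup_directed => [|L _|L1 L2 aL1 aL2]; first by exists [::].
    by case: (join_seq_interm L).
  exists (L1 ++ L2); first by move=> A; rewrite mem_cat => /orP[/aL1 | /aL2].
  by move=> y [] /join_seqS; apply=> A LA; rewrite mem_cat LA ?orbT.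
suff /(_ x) socle_finite : socle R T `<=` \bigcup_(L in atoms) join_seq L.
  by move=> /socle_finite [L aL Lx]; exists L.
apply: (gen_min sP) => y [Ry | [A [TA Ay]]].
  by exists [::]; last by apply: sub_gen; left.
exists [:: A]; first by move=> B; rewrite inE => /eqP->.
by apply: sub_gen; right; exists A; rewrite /= ?inE.
Qed.

Lemma socleS {T1 T2} : T1 `<=` T2 -> socle R T1 `<=` socle R T2.
Proof.
move=> T12; apply: genS => x [Rx | [A [[sA [mA AT1]] Ax]]]; first by left.
by right; exists A; split=> //; split=> //; split=> // y /AT1 /T12.
Qed.

Lemma socle_sub {T} : interm R T -> socle R T `<=` T.
Proof. by move=> [sT RT]; apply: gen_min => // x [/RT // | [A [[_ [_ AT]] /AT]]]. Qed.

Lemma meet_atom {T A} : interm R T -> atom R setT A -> T `&` A = R \/ atom R T (T `&` A).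
Proof.
move=> [sT RT] [sA [mRA _]]; have [RA [_ minA]] := mRA.
have iTA : interm R (T `&` A) by split; [exact: subringI | move=> x Rx; split; auto].
have [-> | TA_A] := minA _ iTA (@subIsetr _ _ _); [by left | right].
by rewrite TA_A; split=> //; split=> //; rewrite -TA_A; apply: subIsetl.
Qed.

Lemma join_seq_meet_atoms {T L} : interm R T -> (forall A, A \in L -> atom R setT A) ->
  join_seq [seq T `&` A | A <- L] `<=` socle R T.
Proof.
move=> iT aL; apply: gen_min; first exact: gen_subring.
move=> x [Rx | ]; first by apply: sub_gen; left.
move=> -[_ /mapP[A LA ->] TAx]; have [TA_R | aTA] := meet_atom iT (aL A LA).
  by apply: sub_gen; left; rewrite -TA_R.
by apply: sub_gen; right; exists (T `&` A).
Qed.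

Hypothesis dR : distributive R.

Lemma meet_join_seq {T L} : interm R T -> (forall A, A \in L -> interm R A) ->
  T `&` join_seq L `<=` join_seq [seq T `&` A | A <- L].
Proof.
move=> iT; elim: L => [_ | A L IHL iL]; first by move=> x [].
have iA : interm R A by apply: iL; rewrite inE eqxx.
rewrite /= !join_seq_cons dR //; last exact: join_seq_interm.
by apply: joinS => //; apply: IHL => B LB; apply: iL; rewrite inE LB orbT.
Qed.

End Socle.

Theorem corollary8p21 (S : comPzRingType) (R : set S) :
  subring R -> distributive R -> FCP R ->
  forall T : set S, interm R T -> T <> R ->
    socle R T = socle R setT `&` T.
Proof.
move=> _ dR _ T iT _; rewrite eqEsubset subsetI; split.
  by split; [exact: (socleS R (subsetT T)) | exact: (socle_sub R iT)].
move=> x [/socle_join_seq [L aL Lx] Tx].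
have iL A : A \in L -> interm R A by move=> /aL [sA [[RA _] _]]; split.
exact: (join_seq_meet_atoms R iT aL x (meet_join_seq R dR iT iL x (conj Tx Lx))).
Qed.
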